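(* For every $w\in W^\star$ and every integer $n\ge1$, $$(B^\dagger)^n|0,w\rangle=2^{-n/2}|n,w\rangle\qquad\text{and}\qquad B^\dagger B|n,w\rangle=2^{-1}|n,w\rangle.$$
   Context: $\Omega=\{0,1\}^{\mathbb N}$ with the shift $\sigma$; for $a\in\{0,1\}$, $ax=(a,x_1,\dots)$. $\mu$ is the measure of maximal entropy (uniform Bernoulli product measure), $L^2(\mu)$ the Hilbert space of square-integrable functions. Ruelle operator $L\phi(x)=\frac12(\phi(0x)+\phi(1x))$; Koopman operator $K\phi=\phi\circ\sigma$; $B=2^{-1/2}L$, $B^\dagger=2^{-1/2}K$. $W$ is the set of finite words over $\{0,1\}$ (including the empty word $\varepsilon$), $\ell(v)$ the length of $v$, $uv$ concatenation, $[v]$ the cylinder of sequences starting with $v$, $\chi_{[v]}$ its indicator. For nonempty $v$, $e_v=2^{\ell(v)/2}(\chi_{[v1]}-\chi_{[v0]})$; also $e^0_\varepsilon=-2^{1/2}\chi_{[0]}$, $e^1_\varepsilon=2^{1/2}\chi_{[1]}$. Define $|0\rangle=2^{-1/2}(e^0_\varepsilon+e^1_\varepsilon)$ and $|n\rangle=2^{-n/2}\sum_{\ell(v)=n}e_v$ for $n\ge1$. For $w\in W$ define $|0,w\rangle=2^{-1/2}(e_{0w}-e_{1w})$ and, for $n\ge1$, $|n,w\rangle=2^{-(n+1)/2}\big(\sum_{\ell(u)=n}e_{u0w}-\sum_{\ell(u)=n}e_{u1w}\big)$. Let $W^\star=\{\star\}\cup W$ and set $|n,\star\rangle=|n\rangle$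 for all $n\ge0$. *)

From Stdlib Require Import Reals List.
Open Scope R_scope.

(* Omega = {0,1}^N, sequences x_1 x_2 ... encoded as nat -> bool with
   index 0 the first letter; false = 0, true = 1. *)
Definition Omega := nat -> bool.

Definition word := list bool.

Definition cons_seq (a : bool) (x : Omega) : Omega :=
  fun n => match n with O => a | S k => x k end.

Definition shift (x : Omega) : Omega := fun n => x (S n).

Fixpoint in_cyl (v : word) (x : Omega) : bool :=
  match v with
  | nil => true
  | a :: v' => Bool.eqb (x O) a && in_cyl v' (shift x)
  end.

Definition chi (v : word) : Omega -> R :=
  fun x => if in_cyl v x then 1 else 0.

Definition Ruelle (phi : Omega -> R) : Omega -> R :=
  fun x => (phi (cons_seq false x) + phi (cons_seq true x)) / 2.
Definition Koopman (phi : Omega -> R) : Omega -> R :=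
  fun x => phi (shift x).
Definition Bop (phi : Omega -> R) : Omega -> R :=
  fun x => / sqrt 2 * Ruelle phi x.
Definition Bdag (phi : Omega -> R) : Omega -> R :=
  fun x => / sqrt 2 * Koopman phi x.

Definition fscale (c : R) (f : Omega -> R) : Omega -> R := fun x => c * f x.
Definition fadd (f g : Omega -> R) : Omega -> R := fun x => f x + g x.
Definition fsub (f g : Omega -> R) : Omega -> R := fun x => f x - g x.

Fixpoint words (n : nat) : list word :=
  match n with
  | O => nil :: nil
  | S k => map (cons false) (words k) ++ map (cons true) (words k)
  end.

Definition sum_words (n : nat) (F : word -> Omega -> R) : Omega -> R :=
  fun x => fold_right (fun u acc => F u x + acc) 0 (words n).

(* e_v = 2^{l(v)/2} (chi_[v1] - chi_[v0])  (used only for nonempty v) *)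
Definition e_ (v : word) : Omega -> R :=
  fscale (sqrt 2 ^ length v) (fsub (chi (v ++ true :: nil)) (chi (v ++ false :: nil))).

Definition e0_eps : Omega -> R := fscale (- sqrt 2) (chi (false :: nil)).
Definition e1_eps : Omega -> R := fscale (sqrt 2) (chi (true :: nil)).

(* W^star = {star} u W, encoded as option word with None = star *)
Definition Wstar := option word.

Definition ket (n : nat) (w : Wstar) : Omega -> R :=
  match w, n with
  | None, O => fscale (/ sqrt 2) (fadd e0_eps e1_eps)
  | None, S _ => fscale (/ sqrt 2 ^ n) (sum_words n e_)
  | Some w, O => fscale (/ sqrt 2) (fsub (e_ (false :: w)) (e_ (true :: w)))
  | Some w, S _ =>
      fscale (/ sqrt 2 ^ (n + 1))
        (fsub (sum_words n (fun u => e_ (u ++ false :: w)))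
              (sum_words n (fun u => e_ (u ++ true :: w))))
  end.

From Pilot Require Import Defs.
From Stdlib Require Import Reals List Lra Lia FunctionalExtensionality.
Open Scope R_scope.

(* Summing e_{uv} over all words u of length n gives 2^{n/2} K^n e_v, so that
   |n,w> = K^n |0,w> for n >= 1.  Hence (B^dagger)^n |0,w> = 2^{-n/2} K^n |0,w>
   = 2^{-n/2} |n,w>, and since L K = id, B^dagger B K f = K L K f / 2 = K f / 2. *)

Definition lsum (l : list word) (F : word -> R) : R :=
  fold_right (fun u acc => F u + acc) 0 l.

Lemma lsum_app l1 l2 F : lsum (l1 ++ l2) F = lsum l1 F + lsum l2 F.
Proof. induction l1 as [|u l1 IH]; simpl; [lra | rewrite IH; lra]. Qed.

Lemma lsum_map f l F : lsum (map f l) F = lsum l (fun u => F (f u)).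
Proof. induction l as [|u l IH]; simpl; [lra | rewrite IH; lra]. Qed.

Lemma lsum_ext l F G : (forall u, F u = G u) -> lsum l F = lsum l G.
Proof. intros FG; induction l as [|u l IH]; simpl; [lra | rewrite FG, IH; lra]. Qed.

Lemma lsum_scale l c F : lsum l (fun u => c * F u) = c * lsum l F.
Proof. induction l as [|u l IH]; simpl; [lra | rewrite IH; lra]. Qed.

Lemma sqrt2_neq0 : sqrt 2 <> 0.
Proof. apply Rgt_not_eq, sqrt_lt_R0; lra. Qed.

Lemma chi_first_letter_partition x : chi (false :: nil) x + chi (true :: nil) x = 1.
Proof. unfold chi; simpl; destruct (x O); simpl; lra. Qed.

Lemma e_cons a v x : e_ (a :: v) x = sqrt 2 * chi (a :: nil) x * e_ v (shift x).
Proof.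
  unfold e_, fscale, fsub, chi; simpl.
  destruct (Bool.eqb (x O) a); simpl; ring.
Qed.

Lemma sum_words_e_app n v x :
  sum_words n (fun u => e_ (u ++ v)) x = sqrt 2 ^ n * e_ v (Nat.iter n shift x).
Proof.
  revert x; induction n as [|n IH]; intros x.
  - unfold sum_words; simpl; lra.
  - change (sum_words (S n) (fun u => e_ (u ++ v)) x)
      with (lsum (words (S n)) (fun u => e_ (u ++ v) x)); simpl words.
    rewrite lsum_app, !lsum_map.
    rewrite !(lsum_ext _ (fun u => e_ ((_ :: u) ++ v) x)
                (fun u => sqrt 2 * chi (_ :: nil) x * e_ (u ++ v) (shift x)))
      by (intros; apply e_cons).
    rewrite !lsum_scale.
    change (lsum (words n) (fun u => e_ (u ++ v) (shift x)))
      with (sum_words n (fun u => e_ (u ++ v)) (shift x)).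
    rewrite IH, Nat.iter_swap, <- (Rmult_1_l (sqrt 2 ^ S n * _)),
      <- (chi_first_letter_partition x).
    simpl; ring.
Qed.

Lemma iter_Koopman n f x : Nat.iter n Koopman f x = f (Nat.iter n shift x).
Proof.
  revert x; induction n as [|n IH]; intros x; [reflexivity |].
  simpl; unfold Koopman at 1; rewrite IH, Nat.iter_swap; reflexivity.
Qed.

(* For w = star the sum is taken with v = nil: [e_ nil] = chi_[1] - chi_[0] is |0>. *)
Lemma ket_shift n w : (1 <= n)%nat -> ket n w = Nat.iter n Koopman (ket 0 w).
Proof.
  intros Hn; destruct n as [|m]; [lia |].
  pose proof sqrt2_neq0 as s2.
  assert (sm : sqrt 2 ^ m <> 0) by (apply pow_nonzero; exact s2).
  apply functional_extensionality; intros x.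
  rewrite iter_Koopman.
  destruct w as [w|]; simpl ket; unfold fscale, fsub, fadd.
  - rewrite !sum_words_e_app, Nat.iter_succ, pow_add; simpl pow.
    field; auto.
  - replace e_ with (fun u => e_ (u ++ nil))
      by (apply functional_extensionality; intros u; rewrite app_nil_r; reflexivity).
    rewrite sum_words_e_app.
    unfold e_, e0_eps, e1_eps, fscale, fsub; simpl.
    field; auto.
Qed.

Lemma iter_Bdag n f : Nat.iter n Bdag f = fscale (/ sqrt 2 ^ n) (Nat.iter n Koopman f).
Proof.
  induction n as [|n IH]; apply functional_extensionality; intros x; unfold fscale.
  - simpl; lra.
  - simpl; unfold Bdag at 1, Koopman at 1 2; rewrite IH; unfold fscale.
    rewrite Rinv_mult; ring.
Qed.

Lemma Ruelle_Koopman f : Ruelle (Koopman f) = f.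
Proof.
  apply functional_extensionality; intros x; unfold Ruelle, Koopman.
  change (shift (Defs.cons_seq false x)) with x; change (shift (Defs.cons_seq true x)) with x.
  lra.
Qed.

Lemma Bdag_Bop_Koopman f : Bdag (Bop (Koopman f)) = fscale (/ 2) (Koopman f).
Proof.
  apply functional_extensionality; intros x.
  unfold Bdag, Bop, fscale; unfold Koopman at 1; rewrite Ruelle_Koopman.
  rewrite <- Rmult_assoc, <- Rinv_mult, sqrt_sqrt by lra.
  reflexivity.
Qed.

Theorem proposition3p4 (w : Wstar) (n : nat) (hn : (1 <= n)%nat) :
  Nat.iter n Bdag (ket 0 w) = fscale (/ sqrt 2 ^ n) (ket n w) /\
  Bdag (Bop (ket n w)) = fscale (/ 2) (ket n w).
Proof.
  rewrite (ket_shift n w hn); split.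
  - apply iter_Bdag.
  - destruct n as [|m]; [lia |].
    exact (Bdag_Bop_Koopman (Nat.iter m Koopman (ket 0 w))).
Qed.
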